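(* For any finite simple graph $X$, the mixed extended threshold GCA map $\mathbf{F}^\updownarrow$ has no periodic orbits of length $\ge 3$.
   Context: Let $X$ be a finite simple graph with vertices $1,\dots,n$; $d(v)$ is the degree of $v$ and $n[v]$ the closed neighborhood of $v$. An extended vertex state is $s_v=(x_v,k_v)\in\{0,1\}\times\{1,\dots,d(v)+1\}$; $\mathcal{S}$ is the product of these sets. Let $\sigma(x[v])=|\{u\in n[v]:x_u=1\}|$. The mixed vertex function maps $(x_v,k_v)$ to $(x_v',k_v')$ with $x_v'=1$ iff $\sigma(x[v])\ge k_v$ (else $0$), and $k_v'=k_v+1$ if $x_v=0$ and $\sigma(x[v])\ge k_v$; $k_v'=k_v-1$ if $x_v=1$ and $\sigma(x[v])<k_v$; $k_v'=k_v$ otherwise. The GCA map $\mathbf{F}^\updownarrow:\mathcal{S}\to\mathcal{S}$ applies this vertex function at all vertices simultaneously. A periodic orbit of length $m$ is a cycle of $m$ distinct states under iteration. *)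

From mathcomp Require Import all_boot.
Set Implicit Arguments. Unset Strict Implicit. Unset Printing Implicit Defensive.

Definition simple_graph (T : finType) (e : rel T) : Prop :=
  symmetric e /\ irreflexive e.

Definition deg (T : finType) (e : rel T) (v : T) : nat := #|[set u | e v u]|.

Definition cnbhd (T : finType) (e : rel T) (v : T) : {set T} :=
  [set u | (u == v) || e v u].

(* extended states s_v = (x_v, k_v); the product of all vertex states *)
Definition gstate (T : finType) := {ffun T -> bool * nat}.

Definition in_S (T : finType) (e : rel T) (s : gstate T) : bool :=
  [forall v, (1 <= (s v).2 <= deg e v + 1)%N].

Definition sigma (T : finType) (e : rel T) (s : gstate T) (v : T) : nat :=
  #|[set u in cnbhd e v | (s u).1]|.

Definition mixed_vertex_fun (T : finType) (e : rel T) (s : gstate T) (v : T)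
  : bool * nat :=
  let x := (s v).1 in
  let k := (s v).2 in
  let fire := (k <= sigma e s v)%N in
  (fire,
   if ~~ x && fire then k.+1
   else if x && ~~ fire then k.-1
   else k).

Definition F_mixed (T : finType) (e : rel T) (s : gstate T) : gstate T :=
  [ffun v => mixed_vertex_fun e s v].

Definition periodic_orbit (T : finType) (f : gstate T -> gstate T)
  (s : gstate T) (m : nat) : Prop :=
  (0 < m)%N /\ iter m f s = s /\ uniq [seq iter i f s | i <- iota 0 m].

(* Along an orbit, k_v - x_v is conserved, so x_v(t+1) = [h_v(t) >= k_v(0) - x_v(0)]
   where h_v(t) counts the active neighbours of v: the states x(t) evolve as a
   threshold network with symmetric 0/1 weights and no self-loops.  Goles'
   energy for such a network is nondecreasing along the dynamics and increases
   strictly unless x(t+2) = x(t); on a periodic orbit it must therefore be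
   constant, so x(2) = x(0), hence also k(2) = k(0) and the period divides 2. *)
From mathcomp Require Import all_boot zify.
Set Implicit Arguments. Unset Strict Implicit. Unset Printing Implicit Defensive.

Lemma slack0_of_periodic_potential (f g d : nat -> nat) (m : nat) :
  0 < m -> f m = f 0 -> g m = g 0 ->
  (forall t, f t + g t.+1 + d t <= f t.+1 + g t) -> d 0 = 0.
Proof.
move=> m_gt0 fm gm step.
have acc n : f 0 + g n + \sum_(0 <= t < n) d t <= f n + g 0.
  elim: n => [|n IHn]; first by rewrite big_geq // addn0 addnC.
  by rewrite big_nat_recr //=; have := step n; lia.
have := acc m; rewrite fm gm.
case: m m_gt0 {acc fm gm} => // m _; rewrite big_nat_recl //=; lia.
Qed.

(* Goles' inequality (x' - x)(2h + 1 - 2 theta) >= [x' != x], with every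
   subtraction moved across. *)
Lemma threshold_gain (theta h : nat) (x' x : bool) : x' = (theta <= h) ->
  x * (2 * h + 1) + x' * (2 * theta) + (x' != x)
    <= x' * (2 * h + 1) + x * (2 * theta).
Proof. by move=> ->; case: leqP; case: x => /=; lia. Qed.

Section SymmetricThresholdNetwork.

Variables (T : finType) (w : T -> T -> nat) (theta : T -> nat) (x : nat -> T -> bool).
Hypothesis w_sym : forall u v, w u v = w v u.

Definition local_field t v := \sum_u w v u * x t u.

Hypothesis x_step : forall t v, x t.+1 v = (theta v <= local_field t v).

Lemma pairing_sym i j : \sum_v x i v * local_field j v = \sum_v x j v * local_field i v.
Proof.
rewrite /local_field; under eq_bigr do rewrite big_distrr.
under [RHS]eq_bigr do rewrite big_distrr.
rewrite exchange_big; apply: eq_bigr => v _; apply: eq_bigr => u _.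
by rewrite w_sym /=; lia.
Qed.

(* Twice Goles' energy of the pair (x t, x t.+1) is pot_pair t - pot_threshold t;
   the two parts are kept apart so as to stay in nat. *)
Definition pot_pair t := \sum_v (x t.+1 v * (2 * local_field t v + 1) + x t v).
Definition pot_threshold t := \sum_v 2 * theta v * (x t.+1 v + x t v).

Lemma pot_pairC t :
  pot_pair t = \sum_v (x t v * (2 * local_field t.+1 v + 1) + x t.+1 v).
Proof.
have expand i j : \sum_v (x i v * (2 * local_field j v + 1) + x j v)
    = 2 * \sum_v x i v * local_field j v + \sum_v x i v + \sum_v x j v.
  rewrite big_distrr -!big_split; apply: eq_bigr => v _ /=.
  by case: (x i v); case: (x j v); lia.
by rewrite /pot_pair !expand pairing_sym; lia.
Qed.

Lemma energy_step t :
  pot_pair t + pot_threshold t.+1 + \sum_v (x t.+2 v != x t v)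
    <= pot_pair t.+1 + pot_threshold t.
Proof.
rewrite pot_pairC /pot_pair /pot_threshold -!big_split; apply: leq_sum => v _ /=.
have := threshold_gain (x t v) (x_step t.+1 v).
by case: (x t.+1 v); lia.
Qed.

Theorem threshold_period2 m : 0 < m ->
  (forall v, x m v = x 0 v) -> forall v, x 2 v = x 0 v.
Proof.
move=> m_gt0 xm.
have field_m v : local_field m v = local_field 0 v.
  by apply: eq_bigr => u _; rewrite xm.
have xm1 v : x m.+1 v = x 1 v by rewrite !x_step field_m.
have pair_per : pot_pair m = pot_pair 0.
  by apply: eq_bigr => v _; rewrite xm1 field_m xm.
have thr_per : pot_threshold m = pot_threshold 0.
  by apply: eq_bigr => v _; rewrite xm1 xm.
have /eqP := slack0_of_periodic_potential m_gt0 pair_per thr_per energy_step.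
by rewrite sum_nat_eq0 => /forallP dist0 v; have := dist0 v; rewrite eqb0 negbK => /eqP.
Qed.

End SymmetricThresholdNetwork.

Section MixedGCAOrbit.

Variables (T : finType) (e : rel T).

Lemma sigma_irrefl (s : gstate T) v : irreflexive e ->
  sigma e s v = (s v).1 + \sum_u e v u * (s u).1.
Proof.
move=> irr; rewrite /sigma -sum1_card big_mkcond /=.
rewrite (eq_bigr (fun u => ((u == v) && (s u).1 : nat) + e v u * (s u).1)); last first.
  move=> u _; rewrite !inE; case: eqP => [->|_] /=; rewrite ?irr /=.
    by case: (s v).1.
  by case: (e v u); case: (s u).1.
by rewrite big_split /= (bigD1 v) //= eqxx big1 ?addn0 // => u /negbTE ->.
Qed.

Lemma F_mixed_balance (s : gstate T) v :
  (F_mixed e s v).2 + (s v).1 = (s v).2 + (F_mixed e s v).1.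
Proof. by rewrite ffunE /mixed_vertex_fun /=; case: (s v).1; case: leqP => /=; lia. Qed.

Variable s : gstate T.

Definition orbit_x t v := (iter t (F_mixed e) s v).1.
Definition orbit_k t v := (iter t (F_mixed e) s v).2.

Lemma orbit_balance t v : orbit_k t v + orbit_x 0 v = orbit_k 0 v + orbit_x t v.
Proof.
elim: t => [|t IHt]; first by [].
have := F_mixed_balance (iter t (F_mixed e) s) v.
by rewrite /orbit_k /orbit_x iterS in IHt *; lia.
Qed.

Lemma orbit_threshold : irreflexive e -> forall t v,
  orbit_x t.+1 v = (orbit_k 0 v - orbit_x 0 v <= \sum_u e v u * orbit_x t u).
Proof.
move=> irr t v; have := orbit_balance t v.
rewrite /orbit_k /orbit_x iterS ffunE /= sigma_irrefl // => bal.
by apply/idP/idP; lia.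
Qed.

End MixedGCAOrbit.

Theorem proposition3p8 (T : finType) (e : rel T) :
  simple_graph e ->
  forall (s : gstate T) (m : nat),
    in_S e s -> periodic_orbit (F_mixed e) s m -> (m < 3)%N.
Proof.
move=> [e_sym e_irr] s m _ [m_gt0 [orbit_m uniq_orbit]].
have x2 : forall v, orbit_x e s 2 v = orbit_x e s 0 v.
  apply: (threshold_period2 (w := fun v u => e v u) _ (orbit_threshold s e_irr) m_gt0).
    by move=> u v; rewrite e_sym.
  by move=> v; rewrite /orbit_x orbit_m.
have iter2 : iter 2 (F_mixed e) s = s.
  apply/ffunP => v; have := orbit_balance e s 2 v; rewrite x2 => /addIn k2.
  rewrite [LHS]surjective_pairing [RHS]surjective_pairing.
  by congr (_, _); [exact: x2 | exact: k2].
rewrite ltnNge; apply/negP => m_ge3.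
move: uniq_orbit; case: m m_ge3 {orbit_m m_gt0} => [|[|[|m]]] // _.
by rewrite /= (_ : F_mixed e (F_mixed e s) = s) // !inE eqxx !orbT.
Qed.
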